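(* Let $M_6=\{(\varepsilon_1,\ldots,\varepsilon_6)\in\mathbb R^6 \mid \varepsilon_i\in\{1,-1\},\ \sum_{i=1}^6\varepsilon_i=0\}$. Then every subset of $M_6$ is saturated.
   Context: A finite set $\{v_1,\dots,v_m\}\subset\mathbb Q^N$ is called saturated if $\mathbb Z_+(v_1,\dots,v_m)=\mathbb Z(v_1,\dots,v_m)\cap\mathbb Q_+(v_1,\dots,v_m)$, where $\mathbb Z_+(\cdot)$ is the set of linear combinations with non-negative integer coefficients, $\mathbb Z(\cdot)$ with integer coefficients, and $\mathbb Q_+(\cdot)$ with non-negative rational coefficients. *)

From HB Require Import structures.
From mathcomp Require Import all_boot all_order all_algebra.
Set Implicit Arguments. Unset Strict Implicit. Unset Printing Implicit Defensive.
Import Order.TTheory GRing.Theory Num.Theory.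
Local Open Scope ring_scope.

Definition Zplus_span (N : nat) (S : seq 'rV[rat]_N) (v : 'rV[rat]_N) : Prop :=
  exists c : 'I_(size S) -> nat, v = \sum_(i < size S) (c i)%:R *: S`_i.

Definition Z_span (N : nat) (S : seq 'rV[rat]_N) (v : 'rV[rat]_N) : Prop :=
  exists c : 'I_(size S) -> int, v = \sum_(i < size S) (c i)%:~R *: S`_i.

Definition Qplus_span (N : nat) (S : seq 'rV[rat]_N) (v : 'rV[rat]_N) : Prop :=
  exists2 c : 'I_(size S) -> rat, (forall i, 0 <= c i)
    & v = \sum_(i < size S) c i *: S`_i.

Definition saturated (N : nat) (S : seq 'rV[rat]_N) : Prop :=
  forall v : 'rV[rat]_N, Zplus_span S v <-> (Z_span S v /\ Qplus_span S v).

Definition inM6 (v : 'rV[rat]_6) : Prop :=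
  (forall i, v 0 i = 1 \/ v 0 i = -1) /\ \sum_(i < 6) v 0 i = 0.

From HB Require Import structures.
From mathcomp Require Import all_boot all_order all_algebra.
Import Order.TTheory GRing.Theory Num.Theory.
Set Implicit Arguments. Unset Strict Implicit. Unset Printing Implicit Defensive.
Local Open Scope ring_scope.

(* Call a finite family S of rational vectors pivotal if every nonempty set A
   of indices is linearly dependent or has a pivot: a linear form that is
   integral (integer-valued on every member of S), equals +-1 on one member of
   A and vanishes on the other members of A.  For a pivotal family, every
   vector of Z(S) /\ Q_+(S) lies in Z_+(S): write it with nonnegative rational
   coefficients and induct on their support; a dependent support shrinks by a
   Caratheodory step, and otherwise a pivot shows that one coefficient is a
   natural number, so that term can be split off.

   M6 consists of ten lines +-r_0, ..., +-r_9.  Pivotality passes from these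
   ten representatives to any family of members of M6 (two members on one line
   are dependent).  That the ten lines are pivotal is a finite computation:
   every nonempty set of lines contains one of thirty explicit circuits or has
   a pivot of the form (x_a + x_b)/2 or (x_a - x_b)/2. *)

Section Pivoting.
Variables (N n : nat) (S : 'I_n -> 'rV[rat]_N).

Definition lincomb (c : 'I_n -> rat) : 'rV[rat]_N := \sum_(i < n) c i *: S i.
Definition support (c : 'I_n -> rat) : {set 'I_n} := [set i | c i != 0].

Definition lform (w : 'cV[rat]_N) (v : 'rV[rat]_N) : rat := (v *m w) 0 0.

Lemma lform_lincomb w c : lform w (lincomb c) = \sum_i c i * lform w (S i).
Proof.
rewrite /lform /lincomb mulmx_suml summxE.
by apply: eq_bigr => i _; rewrite -scalemxAl mxE.
Qed.

Lemma lincomb_set (c c' : 'I_n -> rat) i0 : (forall i, i != i0 -> c' i = c i) ->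
  lincomb c' = lincomb c + (c' i0 - c i0) *: S i0.
Proof.
move=> cc'; rewrite /lincomb (bigD1 i0) //= [in RHS](bigD1 i0) //=.
rewrite [RHS]addrAC -scalerDl [c i0 + _]addrC subrK; congr (_ + _).
by apply: eq_bigr => i /cc' ->.
Qed.

Lemma lincombB (c c' : 'I_n -> rat) :
  lincomb (fun i => c i - c' i) = lincomb c - lincomb c'.
Proof. by rewrite /lincomb -sumrB; apply: eq_bigr => i _; rewrite scalerBl. Qed.

Lemma lincomb_delta i0 x : lincomb (fun i => (i == i0)%:R * x) = x *: S i0.
Proof.
rewrite /lincomb (bigD1 i0) //= eqxx mul1r big1 ?addr0 // => i /negbTE ->.
by rewrite mul0r scale0r.
Qed.

Definition dependent (A : {set 'I_n}) : Prop :=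
  exists d : 'I_n -> rat, [/\ support d \subset A, support d != set0 & lincomb d = 0].

Definition pivot (A : {set 'I_n}) (i0 : 'I_n) (w : 'cV[rat]_N) : Prop :=
  [/\ i0 \in A, lform w (S i0) = 1 \/ lform w (S i0) = -1,
      forall i, lform w (S i) \is a Num.int
    & forall i, i \in A -> i != i0 -> lform w (S i) = 0].

Definition pivotal : Prop :=
  forall A : {set 'I_n}, A != set0 -> dependent A \/ exists i0 w, pivot A i0 w.

Lemma shrink_support (c : 'I_n -> rat) : (forall i, 0 <= c i) ->
  dependent (support c) ->
  exists c', [/\ forall i, 0 <= c' i, lincomb c' = lincomb c
               & (#|support c'| < #|support c|)%N].
Proof.
move=> c_ge0 [d [sub_dc /set0Pn [i0]]]; rewrite inE => di0 d_rel.
have d0 i : c i = 0 -> d i = 0.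
  move=> ci0; apply/eqP; apply: contraT => di.
  by have := subsetP sub_dc i; rewrite !inE di ci0 eqxx => /(_ isT).
wlog d_pos : d sub_dc di0 d_rel d0 / 0 < d i0.
  move=> H; have [dneg|dpos] := ltrP (d i0) 0; last first.
    by apply: (H d) => //; rewrite lt_def di0.
  apply: (H (fun i => - d i)); rewrite ?oppr_gt0 ?oppr_eq0 //.
  - apply/subsetP => i; rewrite inE oppr_eq0 => di.
    by apply: (subsetP sub_dc); rewrite inE.
  - by rewrite /lincomb; under eq_bigr do rewrite scaleNr; rewrite sumrN -/(lincomb d) d_rel oppr0.
  - by move=> i /d0 ->; rewrite oppr0.
have [k dk kmin] := arg_minP (fun j => c j / d j) (d_pos : (fun j => 0 < d j) i0).
set t := c k / d k.
have t_ge0 : 0 <= t by rewrite divr_ge0 // ltW.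
exists (fun j => c j - t * d j); split.
- move=> j; rewrite subr_ge0; have [dj|dj] := ltrP 0 (d j).
    by rewrite -ler_pdivlMr //; apply: kmin.
  exact: le_trans (mulr_ge0_le0 t_ge0 dj) (c_ge0 j).
- rewrite /lincomb; under eq_bigr do rewrite scalerBl -scalerA.
  by rewrite sumrB -scaler_sumr -/(lincomb d) d_rel scaler0 subr0.
- apply: proper_card; apply/properP; split.
    apply/subsetP => j; rewrite !inE; apply: contraNN => /eqP cj.
    by rewrite cj (d0 _ cj) mulr0 subr0.
  exists k; rewrite !inE; last by rewrite /t divfK ?subrr // gt_eqF.
  by apply: contraTneq dk => /d0 ->; rewrite ltxx.
Qed.

(* Pivot step: if a nonnegative combination is also an integral combination,
   then its coefficient at a pivot of its support is a natural number, since
   the integral form w sees only that coefficient. *)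
Lemma pivot_coef_nat (c : 'I_n -> rat) (z : 'I_n -> int) i0 w :
  (forall i, 0 <= c i) -> lincomb c = lincomb (fun i => (z i)%:~R) ->
  pivot (support c) i0 w -> exists k : nat, c i0 = k%:R.
Proof.
move=> c_ge0 cz [ci0 w_unit w_int w_zero].
have w_c : lform w (lincomb c) = c i0 * lform w (S i0).
  rewrite lform_lincomb (bigD1 i0) //= big1 ?addr0 // => i ni0.
  have [ci|] := boolP (i \in support c); first by rewrite w_zero ?mulr0.
  by rewrite inE negbK => /eqP ->; rewrite mul0r.
have w_z : lform w (lincomb c) \is a Num.int.
  rewrite cz lform_lincomb; apply: rpred_sum => i _.
  by rewrite rpredM ?w_int ?intr_int.
have : c i0 \is a Num.int.
  by case: w_unit => w1; move: w_z; rewrite w_c w1 ?mulr1 ?mulrN1 ?rpredN.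
by rewrite (intrEge0 (c_ge0 i0)) => /natrP.
Qed.

Lemma pivotal_saturated : pivotal -> forall c : 'I_n -> rat,
  (forall i, 0 <= c i) -> (exists z : 'I_n -> int, lincomb c = lincomb (fun i => (z i)%:~R)) ->
  exists a : 'I_n -> nat, lincomb c = lincomb (fun i => (a i)%:R).
Proof.
move=> piv c; have [m] := ubnP #|support c|.
elim: m c => // m IH c supp_lt c_ge0 [z cz].
have [supp0|supp_ne0] := eqVneq (support c) set0.
  have c0 i : c i = 0 by have := in_set0 i; rewrite -supp0 inE => /negbFE/eqP.
  by exists (fun=> 0%N); rewrite /lincomb !big1 // => i _; rewrite ?c0 scale0r.
have [dep|[i0 [w pivw]]] := piv _ supp_ne0.
  have [c' [c'_ge0 c'c lt_c'c]] := shrink_support c_ge0 dep.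
  rewrite -c'c; apply: IH => //; first exact: leq_trans lt_c'c _.
  by exists z; rewrite c'c.
have [k ck] := pivot_coef_nat c_ge0 cz pivw.
pose c' i := if i == i0 then 0 else c i.
have c'_set i : i != i0 -> c' i = c i by rewrite /c' => /negPf ->.
have c_c' : lincomb c = lincomb c' + k%:R *: S i0.
  by rewrite (lincomb_set c'_set) /c' eqxx ck sub0r scaleNr addrNK.
have lt_c'c : (#|support c'| < #|support c|)%N.
  have [ci0 _ _ _] := pivw; apply: proper_card; apply/properP; split.
    by apply/subsetP => i; rewrite !inE /c'; case: ifP => // _; rewrite eqxx.
  by exists i0; rewrite // inE /c' eqxx negbK.
have c'_ge0 i : 0 <= c' i by rewrite /c'; case: ifP.
have c'_int : exists z', lincomb c' = lincomb (fun i => (z' i)%:~R).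
  exists (fun i => if i == i0 then z i0 - k%:Z else z i).
  rewrite [RHS](@lincomb_set (fun i => (z i)%:~R) _ i0) => [|i /negPf ni0]; last by rewrite /= ni0.
  by rewrite /= eqxx intrB (addrAC (z i0)%:~R) subrr add0r -cz c_c' scaleNr addrK.
have [a' c'a'] := IH c' (leq_trans lt_c'c supp_lt) c'_ge0 c'_int.
exists (fun i => if i == i0 then (a' i0 + k)%N else a' i).
rewrite [RHS](@lincomb_set (fun i => (a' i)%:R) _ i0) => [|i /negPf ni0]; last by rewrite /= ni0.
by rewrite /= eqxx natrD (addrAC (a' i0)%:R) subrr add0r -c'a' c_c'.
Qed.

End Pivoting.

Section Dictionary.
Variables (N n m : nat) (S : 'I_n -> 'rV[rat]_N) (R : 'I_m -> 'rV[rat]_N).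
Variable line : 'I_n -> 'I_m.
Hypothesis S_R : forall i, S i = R (line i) \/ S i = - R (line i).

Definition sign (i : 'I_n) : rat := if S i == R (line i) then 1 else -1.

Lemma sign_sq i : sign i * sign i = 1.
Proof. by rewrite /sign; case: ifP; rewrite ?mulr1 ?mulrNN. Qed.

Lemma S_sign i : S i = sign i *: R (line i).
Proof.
rewrite /sign; case: eqP => [-> |ne]; first by rewrite scale1r.
by case: (S_R i) => // ->; rewrite scaleN1r.
Qed.

Lemma sign_S i : sign i *: S i = R (line i).
Proof. by rewrite S_sign scalerA sign_sq scale1r. Qed.

Lemma lform_sign w i : lform w (S i) = sign i * lform w (R (line i)).
Proof. by rewrite /lform S_sign -scalemxAl mxE. Qed.

Lemma dependent_same_line (A : {set 'I_n}) i j : i \in A -> j \in A -> i != j ->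
  line i = line j -> dependent S A.
Proof.
move=> iA jA ij lij.
exists (fun k => (k == i)%:R * sign i - (k == j)%:R * sign j); split.
- apply/subsetP => k; rewrite inE /=.
  by case: (eqVneq k i) => [-> //|_]; case: (eqVneq k j) => [-> //|_]; rewrite !mul0r subrr eqxx.
- apply/set0Pn; exists i; rewrite inE eqxx (negbTE ij) mul0r subr0 mul1r.
  by rewrite /sign; case: ifP; rewrite ?oppr_eq0 oner_eq0.
- by rewrite lincombB !lincomb_delta !sign_S lij subrr.
Qed.

Lemma dependent_lift (A : {set 'I_n}) : {in A &, injective line} ->
  dependent R (line @: A) -> dependent S A.
Proof.
move=> inj [d [sub_d d_ne0 d_rel]].
exists (fun i => if i \in A then sign i * d (line i) else 0); split.
- by apply/subsetP => i; rewrite inE; case: ifP; rewrite ?eqxx.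
- have [l dl] := set0Pn _ d_ne0; have /imsetP [i iA li] := subsetP sub_d l dl.
  apply/set0Pn; exists i; move: dl; rewrite !inE iA li mulf_eq0 negb_or => ->.
  by rewrite andbT /sign; case: ifP; rewrite ?oppr_eq0 oner_eq0.
- rewrite -d_rel /lincomb (bigID (mem A)) /= [X in _ + X]big1 ?addr0; last first.
    by move=> i /negbTE ->; rewrite scale0r.
  rewrite (bigID (mem (line @: A))) /= [X in _ = _ + X]big1 ?addr0; last first.
    move=> l lA; apply/eqP; rewrite scaler_eq0; apply/orP; left.
    by apply: contraNT lA => dl; apply: (subsetP sub_d); rewrite inE.
  rewrite big_imset //=; apply: eq_bigr => i iA.
  by rewrite iA mulrC -scalerA sign_S.
Qed.

Lemma pivotal_dictionary : pivotal R -> pivotal S.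
Proof.
move=> pivR A A_ne0.
have [[i j] /and4P [/= iA jA ij /eqP lij]|no_pair] :=
  pickP (fun p : 'I_n * 'I_n => [&& p.1 \in A, p.2 \in A, p.1 != p.2 & line p.1 == line p.2]).
  by left; apply: dependent_same_line iA jA ij lij.
have inj : {in A &, injective line}.
  move=> i j iA jA lij; apply/eqP; apply: contraFT (no_pair (i, j)) => ij.
  by rewrite /= iA jA ij lij eqxx.
have LA_ne0 : line @: A != set0.
  by have [i iA] := set0Pn _ A_ne0; apply/set0Pn; exists (line i); apply: imset_f.
have [dep|[l0 [w [/imsetP [i0 i0A ->] w_unit w_int w_zero]]]] := pivR _ LA_ne0.
  by left; apply: dependent_lift.
right; exists i0, w; split => //.
- by rewrite lform_sign /sign; case: ifP; case: w_unit => ->;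
    rewrite ?mulr1 ?mulrN1 ?mul1r ?mulN1r ?opprK; by [left|right].
- by move=> i; rewrite lform_sign rpredM // /sign; case: ifP; rewrite ?rpredN rpred1.
- move=> i iA ii0; rewrite lform_sign w_zero ?mulr0 ?imset_f //.
  by apply: contra ii0 => /eqP /inj -> //.
Qed.

End Dictionary.

Definition pmone (b : bool) : rat := if b then 1 else -1.

Lemma pmone_cases b : pmone b = 1 \/ pmone b = -1.
Proof. by case: b; [left|right]. Qed.

(* The ten sign patterns with three entries + and last entry +; together with
   their negatives they describe the twenty vectors of M6. *)
Definition patterns : seq (seq bool) := [::
  [:: true; true; false; false; false; true];
  [:: true; false; true; false; false; true];
  [:: true; false; false; true; false; true];
  [:: true; false; false; false; true; true];
  [:: false; true; true; false; false; true];
  [:: false; true; false; true; false; true];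
  [:: false; true; false; false; true; true];
  [:: false; false; true; true; false; true];
  [:: false; false; true; false; true; true];
  [:: false; false; false; true; true; true]].

Definition pbit (l j : nat) : bool := nth false (nth [::] patterns l) j.

Definition line_vec (l : 'I_10) : 'rV[rat]_6 := \row_j pmone (pbit l j).

Fixpoint bitlists (n : nat) : seq (seq bool) :=
  if n is n'.+1 then [seq b :: bs | b <- [:: true; false], bs <- bitlists n'] else [:: [::]].

Lemma mem_bitlists bs : bs \in bitlists (size bs).
Proof.
elim: bs => [|b bs IH] /=; first by rewrite inE.
by case: b; rewrite !mem_cat map_f ?orbT.
Qed.

Definition pmone_sum (bs : seq bool) : rat := foldr (fun b acc => pmone b + acc) 0 bs.

Lemma pmone_sumE (bs : seq bool) :
  \sum_(j < size bs) pmone (nth false bs j) = pmone_sum bs.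
Proof. by elim: bs => [|b bs IH]; rewrite ?big_ord0 // big_ord_recl IH. Qed.

Definition classification_ok : bool :=
  all (fun bs => (pmone_sum bs != 0) ||
        has (fun l => (bs == nth [::] patterns l) || (bs == map negb (nth [::] patterns l)))
            (iota 0 10))
      (bitlists 6).

Lemma classification_certified : classification_ok. Proof. by vm_compute. Qed.

Lemma M6_lines v : inM6 v -> exists l : 'I_10, v = line_vec l \/ v = - line_vec l.
Proof.
case=> v_pm v_sum; pose bs := mkseq (fun j => v 0 (inord j) == 1) 6.
have v_bs (j : 'I_6) : v 0 j = pmone (nth false bs j).
  rewrite nth_mkseq // inord_val /pmone.
  by case: (v_pm j) => ->; rewrite ?eqxx // -subr_eq0 opprK -(natrD _ 1 1) pnatr_eq0.
have /(allP classification_certified) : bs \in bitlists 6.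
  by have := mem_bitlists bs; rewrite size_mkseq.
have -> : pmone_sum bs = 0.
  by rewrite -pmone_sumE size_mkseq -[RHS]v_sum; apply: eq_bigr => j _; rewrite v_bs.
rewrite eqxx orFb => /hasP [l]; rewrite mem_iota => /andP [_ l10] /orP [] /eqP bs_l;
  exists (Ordinal l10); [left|right]; apply/rowP => j; rewrite !mxE v_bs bs_l /pbit //=.
rewrite (nth_map false) /pmone; last by rewrite -(size_map negb) -bs_l size_mkseq.
by case: (nth false _ j); rewrite ?opprK.
Qed.

Definition halfsum (a b : nat) (s : bool) : 'cV[rat]_6 :=
  2^-1 *: (delta_mx (inord a) 0 + pmone s *: delta_mx (inord b) 0).

Definition vanishes (a b : nat) (s : bool) (l : nat) : bool :=
  if s then pbit l a != pbit l b else pbit l a == pbit l b.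

Lemma lform_halfsum a b s l : (a < 6)%N -> (b < 6)%N ->
  lform (halfsum a b s) (line_vec l) = if vanishes a b s l then 0 else pmone (pbit l a).
Proof.
move=> a6 b6; rewrite /lform /halfsum -scalemxAr mulmxDr -scalemxAr -!colE !mxE.
rewrite !inordK // /vanishes /pmone.
by case: (pbit l a); case: (pbit l b); case: s; apply/eqP; vm_compute.
Qed.

Lemma pivot_of_code (A : {set 'I_10}) a b s (l0 : 'I_10) : (a < 6)%N -> (b < 6)%N ->
  l0 \in A -> ~~ vanishes a b s l0 ->
  (forall l : 'I_10, l \in A -> l != l0 -> vanishes a b s l) ->
  pivot line_vec A l0 (halfsum a b s).
Proof.
move=> a6 b6 l0A nvan van; split => // [|l|l lA ll0]; rewrite lform_halfsum //.
- by rewrite (negbTE nvan); apply: pmone_cases.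
- by case: ifP => _; [rewrite rpred0|case: (pmone_cases (pbit l a)) => ->; rewrite ?rpredN rpred1].
- by rewrite van.
Qed.

(* Thirty circuits (minimal relations) among the ten lines, as coefficient
   vectors with entries 0, 1, -1. *)
Definition circuits : seq (seq rat) := [::
  [:: -1; 1; 0; 0; 0; 1; 0; -1; 0; 0];
  [:: -1; 1; 0; 0; 0; 0; 1; 0; -1; 0];
  [:: -1; 0; 1; 0; 1; 0; 0; -1; 0; 0];
  [:: -1; 0; 1; 0; 0; 0; 1; 0; 0; -1];
  [:: -1; 0; 0; 1; 1; 0; 0; 0; -1; 0];
  [:: -1; 0; 0; 1; 0; 1; 0; 0; 0; -1];
  [:: 0; -1; 1; 0; 1; -1; 0; 0; 0; 0];
  [:: 0; -1; 1; 0; 0; 0; 0; 0; 1; -1];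
  [:: 0; -1; 0; 1; 1; 0; -1; 0; 0; 0];
  [:: 0; -1; 0; 1; 0; 0; 0; 1; 0; -1];
  [:: 0; 0; -1; 1; 0; 1; -1; 0; 0; 0];
  [:: 0; 0; -1; 1; 0; 0; 0; 1; -1; 0];
  [:: 0; 0; 0; 0; -1; 1; 0; 0; 1; -1];
  [:: 0; 0; 0; 0; -1; 0; 1; 1; 0; -1];
  [:: 0; 0; 0; 0; 0; -1; 1; 1; -1; 0];
  [:: -1; -1; 1; 1; 1; 0; 0; 0; 0; -1];
  [:: -1; 1; -1; 1; 0; 1; 0; 0; -1; 0];
  [:: -1; 1; 1; -1; 0; 0; 1; -1; 0; 0];
  [:: -1; 1; 0; 0; -1; 1; 1; 0; 0; -1];
  [:: -1; 1; 0; 0; 1; 0; 0; -1; -1; 1];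
  [:: -1; 0; 1; 0; 1; -1; 1; 0; -1; 0];
  [:: -1; 0; 1; 0; 0; 1; 0; -1; 1; -1];
  [:: -1; 0; 0; 1; 1; 1; -1; -1; 0; 0];
  [:: -1; 0; 0; 1; 0; 0; 1; 1; -1; -1];
  [:: 0; -1; 1; 0; 1; 0; -1; -1; 1; 0];
  [:: 0; -1; 1; 0; 0; -1; 1; 1; 0; -1];
  [:: 0; -1; 0; 1; 1; -1; 0; 1; -1; 0];
  [:: 0; -1; 0; 1; 0; 1; -1; 0; 1; -1];
  [:: 0; 0; -1; 1; -1; 1; 0; 1; 0; -1];
  [:: 0; 0; -1; 1; 1; 0; -1; 0; -1; 1]].

Definition circuit_coef (C : seq rat) (l : 'I_10) : rat := nth 0 C l.

Definition circuits_ok : bool :=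
  all (fun C => has (fun l => nth 0 C l != 0) (iota 0 10) &&
         all (fun j => foldr (fun l acc => nth 0 C l * pmone (pbit l j) + acc) 0 (iota 0 10) == 0)
             (iota 0 6))
      circuits.

Lemma circuits_certified : circuits_ok. Proof. by vm_compute. Qed.

Lemma sum_ord_iota (F : nat -> rat) n :
  \sum_(l < n) F l = foldr (fun l acc => F l + acc) 0 (iota 0 n).
Proof. by rewrite -(big_mkord xpredT) unlock /index_iota subn0. Qed.

Lemma dependent_of_circuit (A : {set 'I_10}) C : C \in circuits ->
  (forall l : 'I_10, circuit_coef C l != 0 -> l \in A) -> dependent line_vec A.
Proof.
move=> /(allP circuits_certified) /andP [/hasP [l0 l0_10 Cl0] rel] CA.
exists (circuit_coef C); split.
- by apply/subsetP => l; rewrite inE; apply: CA.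
- move: l0_10; rewrite mem_iota => /andP [_ l0_10].
  by apply/set0Pn; exists (Ordinal l0_10); rewrite inE.
- apply/rowP => j; rewrite summxE mxE.
  under eq_bigr do rewrite mxE mxE.
  rewrite /circuit_coef (sum_ord_iota (fun l => nth 0 C l * pmone (pbit l j))).
  have j6 : nat_of_ord j \in iota 0 6 by rewrite mem_iota ltn_ord.
  exact/eqP/(allP rel _ j6).
Qed.

Definition pivot_code (bs : seq bool) : bool :=
  has (fun a => has (fun b => has (fun s => has (fun l0 =>
     [&& nth false bs l0, ~~ vanishes a b s l0 &
         all (fun l => ~~ nth false bs l || (l == l0) || vanishes a b s l) (iota 0 10)])
   (iota 0 10)) [:: true; false]) (iota 0 6)) (iota 0 6).

Definition circuit_code (bs : seq bool) : bool :=
  has (fun C => all (fun l => (nth 0 C l == 0) || nth false bs l) (iota 0 10)) circuits.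

Definition lines_ok : bool :=
  all (fun bs => ~~ has id bs || pivot_code bs || circuit_code bs) (bitlists 10).

Lemma lines_certified : lines_ok. Proof. by vm_compute. Qed.

Lemma lines_pivotal : pivotal line_vec.
Proof.
move=> A A_ne0; pose bs := mkseq (fun l => inord l \in A) 10.
have bsA (l : 'I_10) : nth false bs l = (l \in A) by rewrite nth_mkseq // inord_val.
have bs_ne0 : has id bs.
  have [l lA] := set0Pn _ A_ne0.
  by apply/(has_nthP false); exists l; rewrite ?size_mkseq ?bsA.
have /(allP lines_certified) : bs \in bitlists 10.
  by have := mem_bitlists bs; rewrite size_mkseq.
rewrite bs_ne0 orFb => /orP [|/hasP [C C_in C_A]].
  move=> /hasP [a]; rewrite mem_iota => /andP [_ a6] /hasP [b]; rewrite mem_iota => /andP [_ b6].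
  move=> /hasP [s _] /hasP [l0]; rewrite mem_iota => /andP [_ l0_10] /and3P [l0A nvan van].
  right; exists (Ordinal l0_10), (halfsum a b s); apply: pivot_of_code => //.
    by rewrite -bsA.
  move=> l lA; rewrite -val_eqE /= => ll0.
  by have := allP van l; rewrite mem_iota ltn_ord bsA lA (negbTE ll0) => /(_ isT).
left; apply: (dependent_of_circuit C_in) => l Cl.
have := allP C_A l; rewrite mem_iota ltn_ord -bsA => /(_ isT).
by rewrite /circuit_coef in Cl; rewrite (negbTE Cl).
Qed.

Theorem mainTheorem2 (S : seq 'rV[rat]_6) :
  (forall v, v \in S -> inM6 v) -> saturated S.
Proof.
move=> S_M6 v; pose F (i : 'I_(size S)) := S`_i.
have [line F_line] :=
  fin_all_exists (fun i : 'I_(size S) => M6_lines (S_M6 _ (mem_nth 0 (ltn_ord i)))).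
have F_pivotal : pivotal F := pivotal_dictionary (S := F) F_line lines_pivotal.
split=> [[a ->]|[[z vz] [c c_ge0 vc]]].
  by split; [exists (fun i => (a i)%:Z) | exists (fun i => (a i)%:R) => // i; apply: ler0n].
have [|a ca] := pivotal_saturated F_pivotal c_ge0; first by exists z; rewrite /lincomb /F -vc.
by exists a; rewrite vc.
Qed.
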